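(* Let $\mathcal{K}$ be a commutative ring, $\mathcal{A}$ a (possibly noncommutative) $\mathcal{K}$-ring and $P,Q$ $\mathcal{A}$-bimodules. For each $r\ge0$, the set $\mathcal{I}_r\subset\mathrm{Hom}_{\mathcal{K}}(P,Q)$ of left $r$-order $Q$-valued differential operators on $P$ (defined in the context) is stable under all four operations $\Phi\mapsto a\Phi$, $\Phi\mapsto\Phi\bullet a$, $\Phi\mapsto\Phi a$, $\Phi\mapsto a\bullet\Phi$ ($a\in\mathcal{A}$), where $(a\Phi)(p)=a\Phi(p)$, $(\Phi\bullet a)(p)=\Phi(ap)$, $(\Phi a)(p)=\Phi(p)a$, $(a\bullet\Phi)(p)=\Phi(pa)$; that is, $\mathcal{I}_r$ carries both the left and the right $\mathcal{A}$–$\mathcal{A}^\bullet$ module structures.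
   Context: A $\mathcal{K}$-ring is a unital associative $\mathcal{K}$-algebra with $1\neq0$; an $\mathcal{A}$-bimodule is a two-sided $\mathcal{A}$-module central over the center of $\mathcal{A}$. $\mathrm{Hom}_{\mathcal{K}}(P,Q)$ is an $\mathcal{A}$-bimodule via $a\Phi$ (left) and $\Phi\bullet a$ (right) as in the claim; put $\delta_a\Phi:=a\Phi-\Phi\bullet a$. For such a bimodule $M$ its center is $\{x\in M: ax=x\bullet a\ \forall a\}$. Define $\mathcal{Z}_0$ = center of $\mathrm{Hom}_{\mathcal{K}}(P,Q)$, $\mathcal{I}_0$ = sub-bimodule (for $a\Phi$, $\Phi\bullet a$) generated by $\mathcal{Z}_0$; inductively for $r\ge1$, $\mathcal{Z}_r$ = center of $\mathrm{Hom}_{\mathcal{K}}(P,Q)/\mathcal{I}_{r-1}$, $\overline{\mathcal{Z}}_r$ = sub-bimodule generated by $\mathcal{Z}_r$, and $\mathcal{I}_r$ the sub-bimodule with $\mathcal{I}_r/\mathcal{I}_{r-1}=\overline{\mathcal{Z}}_r$. Elements of $\mathcal{I}_r$ are the left $r$-order $Q$-valued differential operators on $P$ (Lunts–Rosenberg). *)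

From HB Require Import structures.
From mathcomp Require Import all_boot all_algebra.
Set Implicit Arguments. Unset Strict Implicit. Unset Printing Implicit Defensive.
Import GRing.Theory.
Local Open Scope ring_scope.

(* The K-module
   structure of M is the one induced by the structure map K -> A, k |-> k%:A. *)
Definition is_bimodule (K : comPzRingType) (A : algType K) (M : zmodType)
    (la : A -> M -> M) (ra : M -> A -> M) : Prop :=
  (forall a x y, la a (x + y) = la a x + la a y) /\
      (forall a b x, la (a + b) x = la a x + la b x) /\
      (forall x, la 1 x = x) /\
      (forall a b x, la (a * b) x = la a (la b x)) /\
      (forall a x y, ra (x + y) a = ra x a + ra y a) /\
      (forall a b x, ra x (a + b) = ra x a + ra x b) /\
      (forall x, ra x 1 = x) /\
      (forall a b x, ra x (a * b) = ra (ra x a) b) /\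
      (forall a b x, la a (ra x b) = ra (la a x) b) /\
      (forall z x, (forall b, z * b = b * z) -> la z x = ra x z).

Section DiffOps.
Variables (K : comPzRingType) (A : algType K) (P Q : zmodType).
Variables (laP : A -> P -> P) (raP : P -> A -> P).
Variables (laQ : A -> Q -> Q) (raQ : Q -> A -> Q).

Definition isHomK (f : P -> Q) : Prop :=
  (forall x y, f (x + y) = f x + f y) /\
  (forall (k : K) x, f (laP (k%:A) x) = laQ (k%:A) (f x)).

Definition lmulH (a : A) (f : P -> Q) : P -> Q := fun p => laQ a (f p).
Definition bulletR (f : P -> Q) (a : A) : P -> Q := fun p => f (laP a p).
Definition rmulH (f : P -> Q) (a : A) : P -> Q := fun p => raQ (f p) a.
Definition bulletL (a : A) (f : P -> Q) : P -> Q := fun p => f (raP p a).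

Definition deltaH (a : A) (f : P -> Q) : P -> Q := fun p => laQ a (f p) - f (laP a p).

Inductive gen_bimod (S : (P -> Q) -> Prop) : (P -> Q) -> Prop :=
| gen_in f : isHomK f -> S f -> gen_bimod S f
| gen_0 : gen_bimod S (fun _ => 0)
| gen_add f g : gen_bimod S f -> gen_bimod S g -> gen_bimod S (fun p => f p + g p)
| gen_lmul a f : gen_bimod S f -> gen_bimod S (lmulH a f)
| gen_bullet a f : gen_bimod S f -> gen_bimod S (bulletR f a).

(* Iprev r = I_{r-1}, with I_{-1} = 0.  I_r is generated (as a sub-bimodule
   containing I_{r-1}) by the preimage of the center Z_r of Hom/I_{r-1}. *)
Fixpoint Iprev (r : nat) : (P -> Q) -> Prop :=
  match r with
  | 0 => fun f => forall p, f p = 0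
  | r'.+1 => gen_bimod (fun f => Iprev r' f \/
               (isHomK f /\ forall a, Iprev r' (deltaH a f)))
  end.

Definition Idiff (r : nat) : (P -> Q) -> Prop := Iprev r.+1.

End DiffOps.

From HB Require Import structures.
From mathcomp Require Import all_boot all_algebra.
From Stdlib Require Import FunctionalExtensionality.
Import GRing.Theory.
Local Open Scope ring_scope.

(* In a bimodule the right action of [b] is an additive map commuting with
   every left action, and the same holds for the right action on [Q].  Both
   [Phi a] and [a . Phi] are therefore of the form [g \o Phi \o h] with [g]
   and [h] additive and commuting with the left actions.  Such a sandwich
   commutes with every operation used to build the filtration (sums,
   [a Phi], [Phi . a] and hence [delta_a]) and preserves K-linearity, so by
   induction on [r] it preserves each [I_r]. *)

Section AdditiveMorph.
Context {M N : zmodType} {f : M -> N}.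
Hypothesis fD : {morph f : x y / x + y}.

Lemma morphD_0 : f 0 = 0.
Proof. by apply: (@addrI _ (f 0)); rewrite -fD !addr0. Qed.

Lemma morphD_B x y : f (x - y) = f x - f y.
Proof. by apply: (addIr (f y)); rewrite -fD !subrK. Qed.

End AdditiveMorph.

Section BimoduleRightAction.
Variables (K : comPzRingType) (A : algType K) (M : zmodType).
Variables (la : A -> M -> M) (ra : M -> A -> M).
Hypothesis bimodM : is_bimodule la ra.

Lemma bimodule_raD b : {morph ra^~ b : x y / x + y}.
Proof. by case: bimodM => _ [_ [_ [_ [raD _]]]] x y; apply: raD. Qed.

Lemma bimodule_ra_la b a : {morph ra^~ b : x / la a x}.
Proof.
by case: bimodM => _ [_ [_ [_ [_ [_ [_ [_ [la_ra _]]]]]]]] x /=; rewrite la_ra.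
Qed.

End BimoduleRightAction.

Section SandwichDiffOps.
Variables (K : comPzRingType) (A : algType K) (P Q : zmodType).
Variables (laP : A -> P -> P) (laQ : A -> Q -> Q).
Variables (g : Q -> Q) (h : P -> P).
Hypotheses (gD : {morph g : x y / x + y}) (hD : {morph h : x y / x + y}).
Hypotheses (g_la : forall a, {morph g : x / laQ a x})
           (h_la : forall a, {morph h : x / laP a x}).

Let sandwich (f : P -> Q) : P -> Q := g \o f \o h.

Lemma sandwich_isHomK f :
  isHomK laP laQ f -> isHomK laP laQ (sandwich f).
Proof.
case=> fD f_la; split=> [x y | k x]; rewrite /sandwich /=.
  by rewrite hD fD gD.
by rewrite h_la f_la g_la.
Qed.

Lemma sandwich_lmulH a f : sandwich (lmulH laQ a f) = lmulH laQ a (sandwich f).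
Proof. by apply: functional_extensionality => p; rewrite /sandwich /= g_la. Qed.

Lemma sandwich_bulletR a f :
  sandwich (bulletR laP f a) = bulletR laP (sandwich f) a.
Proof.
by apply: functional_extensionality => p; rewrite /sandwich /bulletR /= h_la.
Qed.

Lemma sandwich_deltaH a f :
  sandwich (deltaH laP laQ a f) = deltaH laP laQ a (sandwich f).
Proof.
apply: functional_extensionality => p.
by rewrite /sandwich /deltaH /= (morphD_B gD) g_la h_la.
Qed.

Lemma Iprev_sandwich r f : Iprev laP laQ r f -> Iprev laP laQ r (sandwich f).
Proof.
elim: r f => [|r IH] f /=.
  by move=> f0 p; rewrite /sandwich /= f0 (morphD_0 gD).
elim=> {f} [f homf [f_prev | [_ f_delta]] | | f1 f2 _ IH1 _ IH2
           | a f _ IHf | a f _ IHf].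
- by apply: gen_in; [exact: sandwich_isHomK homf | left; exact: IH f_prev].
- apply: gen_in; first exact: sandwich_isHomK homf.
  right; split=> [|a]; first exact: sandwich_isHomK homf.
  by rewrite -sandwich_deltaH; apply: IH (f_delta a).
- have -> : sandwich (fun=> 0) = fun=> 0.
    apply: functional_extensionality => p.
    by rewrite /sandwich /= (morphD_0 gD).
  exact: gen_0.
- have -> : sandwich (fun p => f1 p + f2 p) =
            fun p => sandwich f1 p + sandwich f2 p.
    by apply: functional_extensionality => p; rewrite /sandwich /= gD.
  exact: gen_add.
- by rewrite sandwich_lmulH; apply: gen_lmul.
- by rewrite sandwich_bulletR; apply: gen_bullet.
Qed.

End SandwichDiffOps.

Theorem proposition8 (K : comPzRingType) (A : algType K) (P Q : zmodType)
    (laP : A -> P -> P) (raP : P -> A -> P)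
    (laQ : A -> Q -> Q) (raQ : Q -> A -> Q)
    (hP : is_bimodule laP raP) (hQ : is_bimodule laQ raQ)
    (r : nat) (Phi : P -> Q) (a : A) :
  Idiff laP laQ r Phi ->
  [/\ Idiff laP laQ r (lmulH laQ a Phi),
      Idiff laP laQ r (bulletR laP Phi a),
      Idiff laP laQ r (rmulH raQ Phi a) &
      Idiff laP laQ r (bulletL raP a Phi)].
Proof.
move=> IPhi; split; [exact: gen_lmul | exact: gen_bullet | |].
- apply: (@Iprev_sandwich _ _ _ _ _ _ (raQ^~ a) id) IPhi => //.
  + exact: bimodule_raD hQ a.
  + exact: bimodule_ra_la hQ a.
- apply: (@Iprev_sandwich _ _ _ _ _ _ id (raP^~ a)) IPhi => //.
  + exact: bimodule_raD hP a.
  + exact: bimodule_ra_la hP a.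
Qed.
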